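(* Let $r\ge3$, $n\ge r+1$. For every $e\in V_\omega$ we have $R.e=(F_1F_2\cdots F_r).e$ and $R^{-1}.e=(E_{r-1}E_{r-2}\cdots E_1)E_n.e$.
   Context: $V$ is the $\mathbb{Q}(v)$-space with basis $e_t$ ($t\in\mathbb{Z}$); $E_i,F_i,K_i$ ($1\le i\le n$) act by $E_ie_{t+1}=e_t$ if $i\equiv t\pmod n$ and $0$ otherwise, $F_ie_t=e_{t+1}$ if $i\equiv t\pmod n$ and $0$ otherwise, $K_ie_t=ve_t$ if $i\equiv t\pmod n$ and $e_t$ otherwise; $R^{\pm1}e_t=e_{t\pm1}$. On $V^{\otimes r}$ these act via iterated comultiplication $\Delta(E_i)=E_i\otimes K_iK_{i+1}^{-1}+1\otimes E_i$, $\Delta(F_i)=K_i^{-1}K_{i+1}\otimes F_i+F_i\otimes1$, $\Delta(X)=X\otimes X$ for $X\in\{K_i^{\pm1},R^{\pm1}\}$ (indices mod $n$). The weight of a basis tensor $e_{t_1}\otimes\cdots\otimes e_{t_r}$ is $\lambda\in\mathbb{Z}_{\ge0}^n$ with $\lambda_i=|\{j:t_j\equiv i\pmod n\}|$; $V_\lambda$ is the span of basis tensors of weight $\lambda$. $\omega=(1,\dots,1,0,\dots,0)$ with $r$ ones and $n-r$ zeros. *)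

From mathcomp Require Import all_boot all_order all_algebra fraction.
Set Implicit Arguments. Unset Strict Implicit. Unset Printing Implicit Defensive.
Import Order.TTheory GRing.Theory Num.Theory.
Local Open Scope ring_scope.

Definition Qv : fieldType := {fraction {poly rat}}.
Definition v : Qv := tofrac ('X : {poly rat}).

(* A basis tensor e_{t_1} (x) ... (x) e_{t_k} is the sequence [:: t_1; ..; t_k].
   A vector of the tensor power is a finite formal linear combination
   seq (Qv * seq int); its coefficient function is [coef]. *)
Definition vec := seq (Qv * seq int).
Definition coef (l : vec) (s : seq int) : Qv :=
  \sum_(p <- l) p.1 * (p.2 == s)%:R.

(* an operator, given by its values on basis tensors *)
Definition op := seq int -> vec.
Definition act (X : op) (l : vec) : vec :=
  flatten [seq [seq (p.1 * q.1, q.2) | q <- X p.2] | p <- l].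
(* action of the product X_1 X_2 ... X_m (X_m acts first) *)
Definition actw (w : seq op) (l : vec) : vec := foldr act l w.

Definition congr (n : nat) (i : nat) (t : int) : bool := (t == i%:Z %[mod n%:Z])%Z.

(* eigenvalue of K_i on e_t *)
Definition kval (n i : nat) (t : int) : Qv := if congr n i t then v else 1.

(* Delta^{(k)}(E_i) = sum_j 1 (x)..(x) 1 (x) E_i (x) K_iK_{i+1}^{-1} (x)..(x) K_iK_{i+1}^{-1}
   with E_i e_{s} = e_{s-1} if i == s-1 (mod n), else 0. *)
Definition Eop (n i : nat) : op := fun t =>
  [seq (\prod_(x <- drop j.+1 t) (kval n i x / kval n i.+1 x),
        set_nth 0 t j (nth 0 t j - 1))
  | j <- iota 0 (size t) & congr n i (nth 0 t j - 1)].

(* Delta^{(k)}(F_i) = sum_j K_i^{-1}K_{i+1} (x)..(x) K_i^{-1}K_{i+1} (x) F_i (x) 1 (x)..(x) 1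
   with F_i e_s = e_{s+1} if i == s (mod n), else 0. *)
Definition Fop (n i : nat) : op := fun t =>
  [seq (\prod_(x <- take j t) (kval n i.+1 x / kval n i x),
        set_nth 0 t j (nth 0 t j + 1))
  | j <- iota 0 (size t) & congr n i (nth 0 t j)].

Definition Rop : op := fun t => [:: (1, [seq x + 1 | x <- t])].
Definition Rinvop : op := fun t => [:: (1, [seq x - 1 | x <- t])].

(* weight of a basis tensor: lambda_i = #{j : t_j == i mod n}, i = 1..n,
   index i : 'I_n standing for i.+1 *)
Definition weight (n : nat) (t : seq int) : {ffun 'I_n -> nat} :=
  [ffun i : 'I_n => count (congr n i.+1) t].
Definition omega (n r : nat) : {ffun 'I_n -> nat} :=
  [ffun i : 'I_n => nat_of_bool (i < r)%N].

(* A basis tensor of weight omega has exactly one factor in each residue class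
   1, ..., r mod n and no other factor.  In F_1 F_2 ... F_r the operator F_r acts
   first: it raises the unique factor of class r into the empty class r + 1, so
   every K-factor of the coproduct is 1.  Afterwards class r is empty again, so
   F_(r-1) raises the factor of class r - 1 in the same way, and so on down to
   F_1; altogether every factor is raised by one, which is R.  Dually, E_n (that
   is, E_0) lowers the factor of class 1 into the empty class 0, then E_1, ...,
   E_(r-1) lower the classes 2, ..., r in turn, which is R^-1. *)

Set Warnings "-notation-overridden,-ambiguous-paths".
From mathcomp Require Import all_boot all_order all_algebra.
From mathcomp Require Import zify.
Import GRing.Theory Num.Theory.
Local Open Scope ring_scope.

Definition residue (n : nat) (y : int) : nat := `|(y %% n%:Z)%Z|%N.

Section Residue.

Variable n : nat.
Hypothesis n_gt0 : (0 < n)%N.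

Lemma residueE y : (y %% n%:Z)%Z = (residue n y)%:Z.
Proof. by rewrite /residue gez0_abs // modz_ge0 // eqz_nat -lt0n. Qed.

Lemma residue_ltn y : (residue n y < n)%N.
Proof. by rewrite -ltz_nat -residueE ltz_pmod // ltz_nat. Qed.

Lemma congr_residue_mod i y : congr n i y = (residue n y == i %% n)%N.
Proof. by rewrite /congr residueE modz_nat eqz_nat. Qed.

Lemma residue_subr1 y : (0 < residue n y)%N -> residue n (y - 1) = (residue n y).-1.
Proof.
move=> y_pos; apply/eqP; rewrite -eqz_nat -residueE predn_int //.
rewrite -modzDml (residueE y) modz_small // subr_ge0 lez_nat y_pos /=.
by rewrite ltrBlDr ltzD1 lez_nat ltnW ?residue_ltn.
Qed.

End Residue.

Lemma congr_residue n i y : (i < n)%N -> congr n i y = (residue n y == i).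
Proof. by move=> lt_i_n; rewrite congr_residue_mod ?modn_small // (leq_ltn_trans (leq0n i) lt_i_n). Qed.

Lemma congrS_addr1 n i y : congr n i.+1 (y + 1) = congr n i y.
Proof. by rewrite /congr -addn1 PoszD eqz_modDr. Qed.

Lemma congr_subr1 n i y : congr n i (y - 1) = congr n i.+1 y.
Proof. by rewrite -congrS_addr1 subrK. Qed.

Lemma Fop_cons n i x u : Fop n i (x :: u) =
  (if congr n i x then [:: (1, (x + 1) :: u)] else [::]) ++
  [seq (kval n i.+1 x / kval n i x * q.1, x :: q.2) | q <- Fop n i u].
Proof.
rewrite /Fop /= (iotaDl 1 0) filter_map.
case: (congr n i x); rewrite /= ?big_nil; [congr (_ :: _)|];
  by rewrite -!map_comp; apply: eq_map => j /=; rewrite big_cons.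
Qed.

Lemma Eop_cons n i x u : Eop n i (x :: u) =
  (if congr n i (x - 1)
   then [:: (\prod_(y <- u) (kval n i y / kval n i.+1 y), (x - 1) :: u)] else [::]) ++
  [seq (q.1, x :: q.2) | q <- Eop n i u].
Proof.
rewrite /Eop /= (iotaDl 1 0) filter_map.
case: (congr n i (x - 1)); rewrite /= ?drop0; [congr (_ :: _)|];
  by rewrite -!map_comp.
Qed.

Lemma Fop_count0 n i u : count (congr n i) u = 0%N -> Fop n i u = [::].
Proof.
elim: u => [|x u IH] //=; rewrite Fop_cons.
by case: (congr n i x) => //= /IH ->.
Qed.

Lemma Eop_count0 n i u : count (congr n i.+1) u = 0%N -> Eop n i u = [::].
Proof.
elim: u => [|x u IH] //=; rewrite Eop_cons congr_subr1.
by case: (congr n i.+1 x) => //= /IH ->.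
Qed.

Lemma count0_memN {T : eqType} {p : pred T} {u y} : count p u = 0%N -> y \in u -> ~~ p y.
Proof. by move/eqP; rewrite -leqn0 leqNgt -has_count => /hasPn; apply. Qed.

Lemma Fop_count1 {n i u} :
  count (congr n i) u = 1%N -> count (congr n i.+1) u = 0%N ->
  Fop n i u = [:: (1, [seq if congr n i x then x + 1 else x | x <- u])].
Proof.
elim: u => [|x u IH] //= cnt_i /eqP; rewrite addn_eq0 eqb0 => /andP[x_i1 /eqP u_i1].
rewrite Fop_cons; case: ifP cnt_i => x_i /=.
  rewrite add1n => -[u_i]; rewrite Fop_count0 //= map_id_in // => y /(count0_memN u_i).
  by move/negbTE ->.
rewrite add0n => /IH ->{IH} //=.
by rewrite /kval x_i (negbTE x_i1) divr1 mulr1.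
Qed.

Lemma Eop_count1 {n i u} :
  count (congr n i.+1) u = 1%N -> count (congr n i) u = 0%N ->
  Eop n i u = [:: (1, [seq if congr n i.+1 x then x - 1 else x | x <- u])].
Proof.
elim: u => [|x u IH] //= cnt_i1 /eqP; rewrite addn_eq0 eqb0 => /andP[x_i /eqP u_i].
rewrite Eop_cons congr_subr1; case: ifP cnt_i1 => _ /=; last by rewrite add0n => /IH ->.
rewrite add1n => -[u_i1]; rewrite Eop_count0 //= map_id_in => [|y /(count0_memN u_i1) /negbTE -> //].
rewrite big1_seq // => y /andP[_ yu].
by rewrite /kval (negbTE (count0_memN u_i yu)) (negbTE (count0_memN u_i1 yu)) divr1.
Qed.

Lemma act_cat X l1 l2 : act X (l1 ++ l2) = act X l1 ++ act X l2.
Proof. by rewrite /act map_cat flatten_cat. Qed.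

Lemma actw_cat w l1 l2 : actw w (l1 ++ l2) = actw w l1 ++ actw w l2.
Proof. by elim: w => //= X w ->; apply: act_cat. Qed.

Lemma act_single {X : op} {c u u'} : X u = [:: (1, u')] -> act X [:: (c, u)] = [:: (c, u')].
Proof. by move=> Xu; rewrite /act /= Xu /= mulr1. Qed.

Lemma actw_basis w (X : op) (e : vec) :
  (forall p, p \in e -> actw w [:: p] = act X [:: p]) -> actw w e = act X e.
Proof.
elim: e => [|p e IH] we; first by elim: w {we} => //= Y w ->.
rewrite -cat1s actw_cat act_cat we ?mem_head // IH // => q qe.
by rewrite we // inE qe orbT.
Qed.

Lemma congr_eqmod {n i j : nat} : i = j %[mod n] -> congr n i =1 congr n j.
Proof. by move=> eq_ij y; rewrite /congr !modz_nat eq_ij. Qed.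

Lemma eq_Eop n i j : i = j %[mod n] -> Eop n i =1 Eop n j.
Proof.
move=> eq_ij u; have eq_ij1 : i.+1 = j.+1 %[mod n].
  by rewrite -[i.+1]addn1 -[j.+1]addn1 -modnDml eq_ij modnDml.
rewrite /Eop; under eq_filter => k do rewrite (congr_eqmod eq_ij).
apply: eq_map => k; congr (_, _); apply: eq_bigr => x _.
by rewrite /kval (congr_eqmod eq_ij) (congr_eqmod eq_ij1).
Qed.

Lemma eq_act {X Y : op} : X =1 Y -> act X =1 act Y.
Proof. by move=> eq_XY l; rewrite /act; congr flatten; apply: eq_map => p; rewrite eq_XY. Qed.

Definition raise_above n j (x : int) : int := if (j < residue n x)%N then x + 1 else x.
Definition lower_upto n m (x : int) : int := if (residue n x <= m)%N then x - 1 else x.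

Lemma congr_raise_above n j x :
  (0 < j < n)%N -> congr n j (raise_above n j x) = (residue n x == j).
Proof.
case/andP=> j_gt0 j_lt_n; rewrite /raise_above; case: ltnP => [lt_j_x|_].
  rewrite -[in congr n j](prednK j_gt0) congrS_addr1.
  rewrite congr_residue ?(leq_ltn_trans (leq_pred j)) //.
  by rewrite !gtn_eqF // (leq_ltn_trans (leq_pred j)).
by rewrite congr_residue.
Qed.

Lemma congrS_raise_above n j x :
  (j < n)%N -> (0 < residue n x)%N -> congr n j.+1 (raise_above n j x) = false.
Proof.
move=> lt_j_n x_pos; rewrite /raise_above; case: ltnP => [lt_j_x|le_x_j].
  by rewrite congrS_addr1 congr_residue ?gtn_eqF.
rewrite congr_residue_mod ?(leq_ltn_trans (leq0n j)) //.
move: lt_j_n; rewrite leq_eqVlt => /orP[/eqP ->|lt_j1_n].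
  by rewrite modnn gtn_eqF.
by rewrite modn_small // ltn_eqF.
Qed.

Lemma raise_above_pred n j x : (0 < j < n)%N ->
  (if congr n j (raise_above n j x) then raise_above n j x + 1 else raise_above n j x)
  = raise_above n j.-1 x.
Proof.
move=> j_bounds; rewrite congr_raise_above // /raise_above.
case: (ltngtP j (residue n x)) => [lt_j_x|lt_x_j|<-].
- by rewrite ifT // (leq_ltn_trans (leq_pred j)).
- by rewrite ifF //; lia.
- by rewrite ifT //; lia.
Qed.

Lemma residue_lower_upto n m x : (0 < n)%N -> (0 < residue n x)%N ->
  residue n (lower_upto n m x) = if (residue n x <= m)%N then (residue n x).-1 else residue n x.
Proof. by move=> n_gt0 x_pos; rewrite /lower_upto; case: ifP => // _; rewrite residue_subr1. Qed.

Lemma congrS_lower_upto n m x : (m.+1 < n)%N -> (0 < residue n x)%N ->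
  congr n m.+1 (lower_upto n m x) = (residue n x == m.+1).
Proof.
move=> lt_m1_n x_pos; rewrite congr_residue // residue_lower_upto //; last by lia.
by case: ifP => // le_x_m; apply/eqP/eqP; lia.
Qed.

Lemma congr_lower_upto n m x : (m < n)%N -> (0 < residue n x)%N ->
  congr n m (lower_upto n m x) = false.
Proof.
move=> lt_m_n x_pos; rewrite congr_residue // residue_lower_upto //; last by lia.
by case: ifP => le_x_m; apply/eqP; lia.
Qed.

Lemma lower_uptoS n m x : (m.+1 < n)%N -> (0 < residue n x)%N ->
  (if congr n m.+1 (lower_upto n m x) then lower_upto n m x - 1 else lower_upto n m x)
  = lower_upto n m.+1 x.
Proof.
move=> lt_m1_n x_pos; rewrite congrS_lower_upto // /lower_upto.
case: (ltngtP (residue n x) m.+1) => [lt_x_m1|lt_m1_x|->].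
- by rewrite -ltnS lt_x_m1.
- by rewrite leqNgt ltnW.
- by rewrite ltnn.
Qed.

Section Omega.

Variables (n r : nat) (t : seq int).
Hypothesis r_lt_n : (r < n)%N.
Hypothesis weight_t : weight n t = omega n r.

Let n_gt0 : (0 < n)%N := leq_ltn_trans (leq0n r) r_lt_n.

Lemma count_residue_omega j :
  (j < n)%N -> count (fun x => residue n x == j) t = (0 < j <= r)%N.
Proof.
move=> lt_j_n.
have count_congr k (lt_k_n : (k < n)%N) : count (congr n k.+1) t = (k < r)%N.
  by move/ffunP: weight_t => /(_ (Ordinal lt_k_n)); rewrite !ffunE.
case: j lt_j_n => [|j] lt_j_n.
  have lt_pn : (n.-1 < n)%N by rewrite prednK.
  move: (count_congr _ lt_pn); rewrite prednK // leqNgt r_lt_n => <-.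
  by apply: eq_count => x; rewrite congr_residue_mod // modnn.
rewrite -count_congr ?(ltn_trans _ lt_j_n) //.
by apply: eq_count => x; rewrite congr_residue.
Qed.

Lemma residue_omega x : x \in t -> (0 < residue n x <= r)%N.
Proof.
move=> xt; have := count_residue_omega _ (residue_ltn _ n_gt0 x).
by case: (_ && _) => // /count0_memN /(_ xt); rewrite eqxx.
Qed.

Lemma residue_omega_gt0 x : x \in t -> (0 < residue n x)%N.
Proof. by case/residue_omega/andP. Qed.

Lemma Fchain_omega k c : (k <= r)%N ->
  actw [seq Fop n i | i <- iota (r - k)%N.+1 k] [:: (c, t)]
  = [:: (c, map (raise_above n (r - k)%N) t)].
Proof.
elim: k => [_|k IH lt_k_r].
  rewrite subn0 /=; congr [:: (_, _)]; rewrite map_id_in // => x.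
  by case/residue_omega/andP=> _ le_x_r; rewrite /raise_above ltnNge le_x_r.
rewrite subnSK // [actw _ _]/= IH ?(ltnW lt_k_r) // subnS; set j := (r - k)%N.
have j_gt0 : (0 < j)%N by rewrite subn_gt0.
have lt_j_n : (j < n)%N by apply: leq_ltn_trans (leq_subr k r) r_lt_n.
have cnt_j : count (congr n j) (map (raise_above n j) t) = 1%N.
  rewrite count_map (eq_count (a2 := fun x => residue n x == j)) => [|x /=].
    by rewrite count_residue_omega // j_gt0 leq_subr.
  by rewrite congr_raise_above ?j_gt0.
have cnt_j1 : count (congr n j.+1) (map (raise_above n j) t) = 0%N.
  rewrite count_map -(count_pred0 t); apply: eq_in_count => x /residue_omega_gt0 /=.
  exact: congrS_raise_above.
rewrite (act_single (Fop_count1 cnt_j cnt_j1)) -map_comp.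
by congr [:: (_, _)]; apply: eq_map => x /=; rewrite raise_above_pred ?j_gt0.
Qed.

Lemma Echain_omega m c : (m <= r)%N ->
  actw [seq Eop n i | i <- rev (iota 0 m)] [:: (c, t)] = [:: (c, map (lower_upto n m) t)].
Proof.
elim: m => [_|m IH lt_m_r].
  congr [:: (_, _)]; rewrite map_id_in // => x /residue_omega_gt0 x_pos.
  by rewrite /lower_upto leqNgt x_pos.
have lt_m1_n : (m.+1 < n)%N by apply: leq_ltn_trans r_lt_n.
have -> : iota 0 m.+1 = rcons (iota 0 m) m by rewrite -cats1 -addn1 iotaD add0n.
rewrite rev_rcons [actw _ _]/= IH ?(ltnW lt_m_r) //.
have cnt_m1 : count (congr n m.+1) (map (lower_upto n m) t) = 1%N.
  rewrite count_map (eq_in_count (a2 := fun x => residue n x == m.+1)).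
    by rewrite count_residue_omega // lt_m_r.
  by move=> x /residue_omega_gt0 /=; exact: congrS_lower_upto.
have cnt_m : count (congr n m) (map (lower_upto n m) t) = 0%N.
  rewrite count_map -(count_pred0 t); apply: eq_in_count => x /residue_omega_gt0 /=.
  by apply: congr_lower_upto; apply: ltn_trans lt_m1_n.
rewrite (act_single (Eop_count1 cnt_m1 cnt_m)) -map_comp.
by congr [:: (_, _)]; apply/eq_in_map => x /residue_omega_gt0 /=; exact: lower_uptoS.
Qed.

Lemma Fword_omega c : actw [seq Fop n i | i <- iota 1 r] [:: (c, t)] = act Rop [:: (c, t)].
Proof.
have := Fchain_omega r c (leqnn r); rewrite subnn => ->.
rewrite /act /= mulr1; congr [:: (_, _)]; apply/eq_in_map => x /residue_omega_gt0 x_pos.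
by rewrite /raise_above x_pos.
Qed.

Lemma Eword_omega c : (0 < r)%N ->
  actw (rcons [seq Eop n i | i <- rev (iota 1 r.-1)] (Eop n n)) [:: (c, t)]
  = act Rinvop [:: (c, t)].
Proof.
move=> r_gt0; have En0 : Eop n n =1 Eop n 0 by apply: eq_Eop; rewrite modnn mod0n.
have iota0 : iota 0 r = 0%N :: iota 1 r.-1 by rewrite -{1}(prednK r_gt0).
rewrite /actw foldr_rcons (eq_act En0) -foldr_rcons -map_rcons -rev_cons -iota0.
rewrite -/(actw _ _) Echain_omega // /act /= mulr1; congr [:: (_, _)].
by apply/eq_in_map => x /residue_omega/andP[_ le_x_r]; rewrite /lower_upto le_x_r.
Qed.

End Omega.

Theorem lemma2p1p6 (r n : nat) :
  (3 <= r)%N -> (r.+1 <= n)%N ->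
  forall e : vec,
    (forall p, p \in e -> size p.2 = r /\ weight n p.2 = omega n r) ->
    (forall s, coef (act Rop e) s
               = coef (actw [seq Fop n i | i <- iota 1 r] e) s) /\
    (forall s, coef (act Rinvop e) s
               = coef (actw (rcons [seq Eop n i | i <- rev (iota 1 r.-1)] (Eop n n)) e) s).
Proof.
move=> r_ge3 lt_r_n e e_omega.
split=> s; congr coef; symmetry; apply: actw_basis => -[c t] /e_omega [_ /= weight_t].
  exact: Fword_omega.
by apply: Eword_omega => //; apply: leq_trans r_ge3.
Qed.
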